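(* There is a first-order formula $\varphi_r(x,y)$ over binary relation symbols $<,\lhd$ and unary relation symbols $C,Q$ such that for every $n\in\mathbb{N}$ and all $a,b\in[n]$, $([n],<^n,\lhd^n,C^n,Q^n)\models\varphi_r(a,b)$ iff $r(a)=b$.
   Context: $[n]=\{0,1,\dots,n\}$; $<$ is the usual order on $\mathbb{N}$ and $P^n=P\cap[n]^k$ for a $k$-ary relation $P$ on $\mathbb{N}$. Let $q_i=\frac{i(i+1)}{2}$. For $x\in\mathbb{N}$ let $c(x)=\max\{i: q_i\le x\}$, $q(x)=q_{c(x)}$, $r(x)=x-q(x)$. The linear order $\lhd$: $x\lhd y$ iff $r(x)<r(y)$, or $r(x)=r(y)$ and $c(x)<c(y)$. $C=\{x: 2\nmid\lfloor (c(x)+1)/2^{r(x)}\rfloor\}$, $Q=\{x: 2\nmid\lfloor q_{c(x)+1}/2^{r(x)}\rfloor\}$. *)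

From mathcomp Require Import all_boot.
Set Implicit Arguments. Unset Strict Implicit. Unset Printing Implicit Defensive.

Definition qi (i : nat) : nat := (i * i.+1) %/ 2.
(* c(x) = max { i : q_i <= x }  (any such i satisfies i <= x) *)
Definition cf (x : nat) : nat := \max_(i < x.+1 | qi i <= x) i.
Definition qf (x : nat) : nat := qi (cf x).
Definition rf (x : nat) : nat := x - qf x.

Definition lhd (x y : nat) : bool :=
  (rf x < rf y) || ((rf x == rf y) && (cf x < cf y)).
Definition Cset (x : nat) : bool := odd ((cf x).+1 %/ 2 ^ (rf x)).
Definition Qset (x : nat) : bool := odd (qi (cf x).+1 %/ 2 ^ (rf x)).

Inductive form : Type :=
| FEq  : nat -> nat -> form
| FLt  : nat -> nat -> form
| FLhd : nat -> nat -> form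
| FC   : nat -> form
| FQ   : nat -> form
| FNot : form -> form
| FAnd : form -> form -> form
| FOr  : form -> form -> form
| FEx  : nat -> form -> form
| FAll : nat -> form -> form.

Definition upd (e : nat -> nat) (v m : nat) : nat -> nat :=
  fun i => if i == v then m else e i.

(* Satisfaction in the structure ([n], <^n, <|^n, C^n, Q^n) under an
   assignment e (whose values are assumed to lie in [n]); quantifiers range
   over [n] = {0,...,n}. *)
Fixpoint sat (n : nat) (e : nat -> nat) (f : form) : Prop :=
  match f with
  | FEq i j => e i = e j
  | FLt i j => e i < e j
  | FLhd i j => lhd (e i) (e j)
  | FC i => Cset (e i)
  | FQ i => Qset (e i)
  | FNot g => ~ sat n e g
  | FAnd g h => sat n e g /\ sat n e h
  | FOr g h => sat n e g \/ sat n e h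
  | FEx v g => exists m, m <= n /\ sat n (upd e v m) g
  | FAll v g => forall m, m <= n -> sat n (upd e v m) g
  end.

From mathcomp Require Import all_boot zify.
From Stdlib Require Import Classical.
Set Implicit Arguments. Unset Strict Implicit. Unset Printing Implicit Defensive.

(* Every x = q_{c(x)} + r(x) is the cell in row c(x) and column r(x) <= c(x)
   of a triangular grid; < reads the grid row by row and <| column by column.
   From < and <| alone one defines the first column, "same row", "same
   column" and the diagonal cells (j, j), which index bit positions j.  Along
   row c, C spells the binary expansion of c + 1 and Q that of q_{c+1}.
   Now r(a) = b iff b + 1 = r(a) + 1, and b + 1 = q_{c(b)} + (r(b) + 1): the
   bits of r(a) + 1 and r(b) + 1 are read off C in rows r(a) and r(b), those
   of q_{c(b)} off Q in row c(b) - 1, and the bits of the sum are first-order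
   definable through the carry-lookahead description of carries. *)

Arguments lhd : simpl never.
Arguments rf : simpl never.
Arguments cf : simpl never.
Arguments Cset : simpl never.
Arguments Qset : simpl never.
Arguments upd : simpl never.

(** * Triangular coordinates *)

Lemma qiS i : qi i.+1 = qi i + i.+1.
Proof.
rewrite /qi; have -> : i.+1 * i.+2 = i.+1 * 2 + i * i.+1 by lia.
by rewrite divnMDl // addnC.
Qed.

Lemma ltn_qi : {homo qi : i j / i < j}.
Proof. by apply: homo_ltn ltn_trans _ => i; rewrite qiS; lia. Qed.

Lemma leq_qi : {homo qi : i j / i <= j}.
Proof. exact: ltnW_homo ltn_qi. Qed.

Lemma leq_id_qi i : i <= qi i.
Proof. by elim: i => // i IH; rewrite qiS; lia. Qed.

Lemma ltn_qi_exp2 c : qi c < 2 ^ c.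
Proof. by elim: c => // c IH; rewrite qiS expnS; have := ltn_expl c (ltnSn 1); lia. Qed.

Lemma ltn_diag i j : (qi i + i < qi j + j) = (i < j).
Proof.
apply/idP/idP => [|lt_ij]; last by have := ltn_qi lt_ij; lia.
by apply: contraLR; rewrite -!leqNgt => le_ji; have := leq_qi le_ji; lia.
Qed.

Lemma cf_unique x c : qi c <= x < qi c.+1 -> cf x = c.
Proof.
move=> /andP [lb ub]; apply/eqP; rewrite eqn_leq; apply/andP; split.
  by apply/bigmax_leqP => i /= hi; rewrite leqNgt; apply/negP => /leq_qi; lia.
have hc : c < x.+1 by have := leq_id_qi c; lia.
exact: (@leq_bigmax_cond _ (fun i : 'I_x.+1 => qi i <= x) _ (Ordinal hc)).
Qed.

Lemma cf_bounds x : qi (cf x) <= x < qi (cf x).+1.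
Proof.
have [c hc] : exists c, qi c <= x < qi c.+1.
  elim: x => [|x [c /andP [lb ub]]]; first by exists 0.
  have [lt_x1|le_x1] := ltnP x.+1 (qi c.+1); first by exists c; apply/andP; lia.
  by exists c.+1; rewrite (qiS c.+1); apply/andP; lia.
by rewrite (cf_unique hc).
Qed.

Lemma cfrfE x : x = qi (cf x) + rf x.
Proof. by have := cf_bounds x; rewrite /rf /qf; lia. Qed.

Lemma rf_leq_cf x : rf x <= cf x.
Proof. by have := cf_bounds x; rewrite /rf /qf qiS; lia. Qed.

Lemma cf_qiD c r : r <= c -> cf (qi c + r) = c.
Proof. by move=> le_rc; apply: cf_unique; rewrite qiS; apply/andP; lia. Qed.

Lemma rf_qiD c r : r <= c -> rf (qi c + r) = r.
Proof. by move=> le_rc; rewrite /rf /qf cf_qiD //; lia. Qed.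

Lemma cfrf_inj x y : cf x = cf y -> rf x = rf y -> x = y.
Proof. by move=> ec er; rewrite (cfrfE x) (cfrfE y) ec er. Qed.

Lemma cf_mono : {homo cf : x y / x <= y}.
Proof.
move=> x y le_xy; rewrite leqNgt; apply/negP => /leq_qi.
by have := cf_bounds x; have := cf_bounds y; lia.
Qed.

Lemma ltn_of_ltn_cf x y : cf x < cf y -> x < y.
Proof. by move=> /leq_qi; have := cf_bounds x; have := cf_bounds y; lia. Qed.

Lemma rf0 : rf 0 = 0. Proof. exact: (@rf_qiD 0 0). Qed.
Lemma rf1 : rf 1 = 0. Proof. exact: (@rf_qiD 1 0). Qed.
Lemma cf2 : cf 2 = 1. Proof. exact: (@cf_qiD 1 1). Qed.
Lemma rf2 : rf 2 = 1. Proof. exact: (@rf_qiD 1 1). Qed.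
Lemma rf3 : rf 3 = 0. Proof. exact: (@rf_qiD 2 0). Qed.

Lemma lhdxx x : lhd x x = false.
Proof. by rewrite /lhd !ltnn andbF. Qed.

Lemma lhd_ltn_col0 x y : rf y = 0 -> lhd x y -> x < y.
Proof. by rewrite /lhd => ->; case/orP => //= /andP [/eqP ? /ltn_of_ltn_cf]. Qed.

Lemma lhd_rf_leq x y : lhd x y -> rf x <= rf y.
Proof. by rewrite /lhd; lia. Qed.

Lemma lhd_cell11 x : 0 < rf x -> lhd 2 x \/ 2 = x.
Proof.
move=> rx_gt0; have := rf_leq_cf x; rewrite /lhd rf2 cf2 => le_rc.
have [|_|eq_rx] := ltngtP (rf x) 1; [lia | by left |].
have [gt_cx|le_cx] := ltnP 1 (cf x); first by left.
by right; apply: cfrf_inj; rewrite ?cf2 ?rf2; lia.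
Qed.

Lemma rf_qi c : rf (qi c) = 0.
Proof. by rewrite -[qi c]addn0 rf_qiD. Qed.

Lemma ltn_qi_cf x y : cf x < cf y -> x < qi (cf y).
Proof. by move=> /leq_qi; have := cf_bounds x; rewrite qiS; lia. Qed.

Lemma qi_cf_leq x : qi (cf x) <= x.
Proof. by have /andP [] := cf_bounds x. Qed.

Lemma ltn_cf_row_start x y : cf x < cf y <-> exists m, [/\ rf m = 0, x < m & m <= y].
Proof.
split=> [lt_cf|[m [rm0 lt_xm le_my]]].
  by exists (qi (cf y)); split; [exact: rf_qi | exact: ltn_qi_cf | exact: qi_cf_leq].
have := cf_mono le_my; suff : cf x < cf m by lia.
rewrite ltnNge; apply/negP => le_mx.
have eq_cf : cf x = cf m by have := cf_mono (ltnW lt_xm); lia.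
by have := cf_bounds x; have := cfrfE m; rewrite eq_cf rm0; lia.
Qed.

Lemma diagE d : rf d = cf d -> d = qi (cf d) + cf d.
Proof. by move=> rc; rewrite {1}(cfrfE d) rc. Qed.

Lemma qf_addS_rf x : qf x + (rf x).+1 = x.+1.
Proof. by rewrite /qf addnS -cfrfE. Qed.

(** * Binary digits and carries *)

Definition bit j x := odd (x %/ 2 ^ j).
Definition carry x y j := 2 ^ j <= x %% 2 ^ j + y %% 2 ^ j.

Lemma bit_add x y j : bit j (x + y) = bit j x (+) bit j y (+) carry x y j.
Proof. by rewrite /bit /carry divnD ?expn_gt0 // !oddD oddb. Qed.

Lemma bit_small x j : x < 2 ^ j -> bit j x = false.
Proof. by move=> lt_x; rewrite /bit divn_small. Qed.

Lemma bit_over x c j : x < 2 ^ c -> c <= j -> bit j x = false.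
Proof. by move=> lt_x le_cj; rewrite bit_small // (leq_trans lt_x) ?leq_exp2l. Qed.

Lemma modn_exp2S x j : x %% 2 ^ j.+1 = x %% 2 ^ j + bit j x * 2 ^ j.
Proof.
rewrite /bit; set d := 2 ^ j; have d_gt0 : 0 < d by rewrite expn_gt0.
have ex := divn_eq x d; have eq := odd_double_half (x %/ d).
set q := x %/ d in ex eq *; set r := x %% d in ex *.
have lt_rd : r < d by rewrite ltn_mod.
have ex2 : x = q./2 * (d * 2) + (odd q * d + r).
  by rewrite {1}ex -{1}eq -!muln2; case: (odd q) => /=; lia.
rewrite expnS mulnC -/d {1}ex2 modnMDl modn_small; first lia.
by case: (odd q) => /=; lia.
Qed.

Lemma carry0 x y : carry x y 0 = false.
Proof. by rewrite /carry expn0 !modn1. Qed.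

Lemma carryS x y j :
  carry x y j.+1 = (bit j x && bit j y) || ((bit j x || bit j y) && carry x y j).
Proof.
rewrite /carry !modn_exp2S expnS.
have := ltn_pmod x (expn_gt0 2 j); have := ltn_pmod y (expn_gt0 2 j).
by case: (bit j x); case: (bit j y) => /= *; apply/idP/idP; lia.
Qed.

Lemma carry_lookahead x y j : carry x y j <->
  exists i, [/\ i < j, bit i x, bit i y &
                forall l, i < l -> l < j -> bit l x || bit l y].
Proof.
elim: j => [|j IH]; first by rewrite carry0; split=> // [[i []]].
rewrite carryS; split.
  case/orP => [/andP [bx by_]|/andP [bxy /IH [i [lt_ij bx by_ between]]]].
    by exists j; split=> // l; lia.
  exists i; split=> // [|l lt_il]; first lia.
  by rewrite ltnS leq_eqVlt => /predU1P [->|]; last exact: between.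
case=> i [lt_ij bx by_ between]; rewrite ltnS leq_eqVlt in lt_ij.
case/predU1P: lt_ij => [eq_ij|lt_ij]; first by rewrite -eq_ij bx by_.
apply/orP; right; rewrite between //; apply/IH.
by exists i; split=> // l lt_il lt_lj; apply: between; lia.
Qed.

Lemma bits_inj x y L : x < 2 ^ L -> y < 2 ^ L ->
  (forall j, j < L -> bit j x = bit j y) -> x = y.
Proof.
move=> lt_x lt_y eq_bits; rewrite -(modn_small lt_x) -(modn_small lt_y).
elim: L {lt_x lt_y} eq_bits => [|L IH] eq_bits; first by rewrite expn0 !modn1.
by rewrite !modn_exp2S eq_bits // IH // => j lt_jL; apply: eq_bits; lia.
Qed.

Lemma succ_eq_of_bits b K : b <= qi K + K ->
  (forall j, j <= K -> bit j b.+1 = bit j K.+1) -> b = K.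
Proof.
move=> le_b eq_bits; apply/succn_inj/(@bits_inj _ _ K.+1) => //.
- by have := ltn_qi_exp2 K.+1; rewrite qiS; lia.
- exact: ltn_expl.
Qed.

Definition FImp f g := FOr (FNot f) g.
Definition FIff f g := FAnd (FImp f g) (FImp g f).
Definition FXor f g := FOr (FAnd f (FNot g)) (FAnd (FNot f) g).

Lemma sat_FImp n e f g : sat n e (FImp f g) <-> (sat n e f -> sat n e g).
Proof.
rewrite /FImp /=; split=> [[nf|sg] sf|imp] //.
by have [/imp|] := classic (sat n e f); [right|left].
Qed.

Lemma sat_FIff n e f g : sat n e (FIff f g) <-> (sat n e f <-> sat n e g).
Proof. by rewrite /FIff; cbn -[FImp]; rewrite !sat_FImp; split=> -[]. Qed.

Lemma sat_FXor n e f g (u v : bool) : (sat n e f <-> u) -> (sat n e g <-> v) ->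
  (sat n e (FXor f g) <-> u (+) v).
Proof. by rewrite /FXor /= => -> ->; case: u; case: v; split=> /=; intuition. Qed.

Definition env n (e : nat -> nat) := forall i, e i <= n.

Lemma upd_eq e v m : upd e v m v = m.
Proof. by rewrite /upd eqxx. Qed.

Lemma upd_neq e v m i : i <> v -> upd e v m i = e i.
Proof. by rewrite /upd; case: eqP. Qed.

Lemma env_upd n e v m : env n e -> m <= n -> env n (upd e v m).
Proof. by move=> he le_mn i; rewrite /upd; case: eqP. Qed.

Ltac simpl_upd := repeat (rewrite upd_eq || (rewrite upd_neq; [|lia])).

(** * Definable relations *)

(* A macro [M x .. k] has its free variables below [k] and binds [k], [k.+1],
   ... only; its [sat_M] lemma reads it off an arbitrary assignment.
   Column 0 is where <| agrees with <; for n = 2 the cell 2 = (1, 1) also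
   passes this test, and [LastOfThree] removes it. *)
Definition LhdIncBelow z k := FAll k (FAll k.+1 (FImp
  (FAnd (FLhd k k.+1) (FOr (FLhd k.+1 z) (FEq k.+1 z))) (FLt k k.+1))).
Definition LastOfThree z k := FEx k (FEx k.+1 (FAnd (FLt k k.+1) (FAnd (FLt k.+1 z)
  (FAll k.+2 (FOr (FEq k.+2 k) (FOr (FEq k.+2 k.+1) (FEq k.+2 z))))))).
Definition FirstCol z k := FAnd (LhdIncBelow z k) (FNot (LastOfThree z k)).

Lemma sat_LhdIncBelow n e z k : env n e -> z < k ->
  (sat n e (LhdIncBelow z k) <-> rf (e z) = 0 \/ n = 2 /\ e z = 2).
Proof.
move=> he hz; have hzn := he z; rewrite /LhdIncBelow; cbn -[FImp leq]; split.
  move=> inc; have [le3n|lt_n3] := leqP 3 n; last first.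
    have [ez|[ez|ez]] : e z = 0 \/ e z = 1 \/ e z = 2 by lia.
    - by left; rewrite ez rf0.
    - by left; rewrite ez rf1.
    - by right; lia.
  have [//|rz_gt0] := posnP (rf (e z)); [by left | exfalso].
  have /sat_FImp /= := inc 3 le3n 2 (ltnW le3n); simpl_upd => imp.
  suff /imp : lhd 3 2 /\ (lhd 2 (e z) \/ 2 = e z) by [].
  by split; [rewrite /lhd rf3 rf2 | exact: lhd_cell11].
case=> [rz0|[n2 z2]] m hm m0 hm0; apply/sat_FImp => /=; simpl_upd; case=> lhd_m lhd_z.
  apply: lhd_ltn_col0 lhd_m; have : rf m0 <= rf (e z) by case: lhd_z => [/lhd_rf_leq|->].
  by rewrite rz0; lia.
have [eq_m0|ne_m0] := eqVneq m0 2.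
  by move: lhd_m; rewrite eq_m0; have [->|] := eqVneq m 2; [rewrite lhdxx|lia].
apply: lhd_ltn_col0 lhd_m.
have [->|->] : m0 = 0 \/ m0 = 1 by lia.
  exact: rf0.
exact: rf1.
Qed.

Lemma sat_LastOfThree n e z k : env n e -> z < k ->
  (sat n e (LastOfThree z k) <-> n = 2 /\ e z = 2).
Proof.
move=> he hz; have hzn := he z; rewrite /LastOfThree /=; split.
  case=> u [hu [v [hv]]]; simpl_upd; case=> lt_uv [lt_vz only].
  have := only 0 (leq0n n); have := only 1 ltac:(lia); have := only 2 ltac:(lia).
  by have := only n (leqnn n); simpl_upd; lia.
case=> n2 z2; exists 0; split=> //; exists 1; split; first lia.
by simpl_upd; split; [|split] => [||m hm]; simpl_upd; lia.
Qed.

Lemma sat_FirstCol n e z k : env n e -> z < k ->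
  (sat n e (FirstCol z k) <-> rf (e z) = 0).
Proof.
move=> he hz; rewrite /FirstCol; cbn -[LhdIncBelow LastOfThree].
rewrite sat_LhdIncBelow // sat_LastOfThree //.
split=> [[[//|three] /(_ three)] //|rz0]; split=> [|[_ z2]]; first by left.
by move: rz0; rewrite z2 rf2.
Qed.

Definition SameRow x y k := FAll k (FImp (FirstCol k k.+1)
  (FAnd (FNot (FAnd (FLt x k) (FNot (FLt y k)))) (FNot (FAnd (FLt y k) (FNot (FLt x k)))))).

Lemma sat_SameRow n e x y k : env n e -> x < k -> y < k ->
  (sat n e (SameRow x y k) <-> cf (e x) = cf (e y)).
Proof.
move=> he hx hy; rewrite /SameRow; cbn -[FImp FirstCol leq]; split.
  move=> same; apply/eqP; rewrite eqn_leq; apply/andP.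
  split; rewrite leqNgt; apply/negP => /ltn_cf_row_start [m [rm0 lt_m le_m]];
    have hm := leq_trans le_m (he _); have he' := env_upd k he hm;
    have /sat_FImp := same _ hm; rewrite sat_FirstCol //; simpl_upd => /(_ rm0) /=;
    simpl_upd; lia.
move=> eq_cf m hm; have he' := env_upd k he hm; apply/sat_FImp; rewrite sat_FirstCol //.
simpl_upd => rm0 /=; simpl_upd; split=> -[lt_m ge_m].
  suff : cf (e x) < cf (e y) by lia.
  by apply/ltn_cf_row_start; exists m; split=> //; lia.
suff : cf (e y) < cf (e x) by lia.
by apply/ltn_cf_row_start; exists m; split=> //; lia.
Qed.

Definition AboveInCol x y k := FAnd (FLhd x y) (FAnd (FLt x y) (FAnd (FNot (SameRow x y k))
  (FNot (FEx k (FAnd (FLhd x k) (FAnd (FLhd k y) (SameRow k y k.+1))))))).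

Lemma sat_AboveInCol n e x y k : env n e -> x < k -> y < k ->
  (sat n e (AboveInCol x y k) <-> rf (e x) = rf (e y) /\ cf (e x) < cf (e y)).
Proof.
move=> he hx hy; rewrite /AboveInCol; cbn -[SameRow leq]; rewrite sat_SameRow //.
split=> [[lhd_xy [lt_xy [ne_cf no_between]]] | [eq_rf lt_cf]].
  have lt_cf : cf (e x) < cf (e y) by have := cf_mono (ltnW lt_xy); lia.
  move: lhd_xy; rewrite /lhd => /orP [lt_rf|/andP [/eqP //]]; exfalso; apply: no_between.
  have le_rc := rf_leq_cf (e x).
  have hm : qi (cf (e y)) + rf (e x) <= n by have := cfrfE (e y); have := he y; lia.
  exists (qi (cf (e y)) + rf (e x)); split=> //; have he' := env_upd k he hm.
  rewrite sat_SameRow //; last lia.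
  by simpl_upd; rewrite /lhd cf_qiD ?rf_qiD; lia.
split; first by rewrite /lhd eq_rf eqxx lt_cf orbT.
split; first exact: ltn_of_ltn_cf.
split=> [|[m [hm]]]; first lia.
have he' := env_upd k he hm; rewrite sat_SameRow //; last lia.
by simpl_upd; rewrite /lhd; lia.
Qed.

Definition SameCol x y k := FOr (FEq x y) (FOr (AboveInCol x y k) (AboveInCol y x k)).

Lemma sat_SameCol n e x y k : env n e -> x < k -> y < k ->
  (sat n e (SameCol x y k) <-> rf (e x) = rf (e y)).
Proof.
move=> he hx hy; rewrite /SameCol; cbn -[AboveInCol]; rewrite !sat_AboveInCol //.
split=> [[->|[[]|[]]] //|eq_rf].
have [lt_cf|gt_cf|eq_cf] := ltngtP (cf (e x)) (cf (e y)).
- by right; left.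
- by right; right.
- by left; apply: cfrf_inj.
Qed.

Definition Diag d k := FNot (FEx k (FAnd (FLhd k d) (SameCol k d k.+1))).

Lemma sat_Diag n e d k : env n e -> d < k -> (sat n e (Diag d k) <-> rf (e d) = cf (e d)).
Proof.
move=> he hd; rewrite /Diag; cbn -[SameCol leq]; have le_rc := rf_leq_cf (e d).
split=> [no_above|diag [m [hm]]].
  have [lt_rc|] := ltnP (rf (e d)) (cf (e d)); last lia.
  exfalso; apply: no_above.
  have hm : qi (rf (e d)) + rf (e d) <= n.
    by have := cfrfE (e d); have := leq_qi le_rc; have := he d; lia.
  exists (qi (rf (e d)) + rf (e d)); split=> //; have he' := env_upd k he hm.
  rewrite sat_SameCol //; last lia.
  by simpl_upd; rewrite /lhd cf_qiD ?rf_qiD //; lia.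
have he' := env_upd k he hm; rewrite sat_SameCol //; last lia.
simpl_upd.
by rewrite /lhd => -[]; have := rf_leq_cf m; lia.
Qed.

Definition InCell (atom : nat -> form) w z k :=
  FEx k (FAnd (SameRow k w k.+1) (FAnd (SameCol k z k.+1) (atom k))).

Lemma sat_InCell (atom : nat -> form) (f : nat -> nat) n e w z k :
  (forall e' i, sat n e' (atom i) <-> bit (rf (e' i)) (f (cf (e' i)))) ->
  (forall c, f c < 2 ^ c.+1) -> env n e -> w < k -> z < k ->
  qi (cf (e w)) + cf (e w) <= n ->
  (sat n e (InCell atom w z k) <-> bit (rf (e z)) (f (cf (e w)))).
Proof.
move=> hatom f_small he hw hz row_w; rewrite /InCell; cbn -[SameRow SameCol leq].
split=> [[m [hm]]|set_bit].
  have he' := env_upd k he hm; rewrite sat_SameRow ?sat_SameCol ?hatom //; try lia.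
  by simpl_upd => -[<- [<-]].
have le_zw : rf (e z) <= cf (e w).
  by apply: contraTT set_bit; rewrite -ltnNge => lt_wz; rewrite (bit_over (f_small _)).
have hm : qi (cf (e w)) + rf (e z) <= n by lia.
exists (qi (cf (e w)) + rf (e z)); split=> //; have he' := env_upd k he hm.
rewrite sat_SameRow ?sat_SameCol ?hatom //; try lia.
by simpl_upd; rewrite cf_qiD ?rf_qiD.
Qed.

Definition BitC w z k := InCell FC w z k.
Definition BitQ w z k := InCell FQ w z k.

Lemma sat_BitC n e w z k : env n e -> w < k -> z < k ->
  qi (cf (e w)) + cf (e w) <= n ->
  (sat n e (BitC w z k) <-> bit (rf (e z)) (cf (e w)).+1).
Proof. exact: (sat_InCell (f := succn)) (fun c => ltn_expl c.+1 (ltnSn 1)). Qed.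

Lemma sat_BitQ n e w z k : env n e -> w < k -> z < k ->
  qi (cf (e w)) + cf (e w) <= n ->
  (sat n e (BitQ w z k) <-> bit (rf (e z)) (qi (cf (e w)).+1)).
Proof. exact: (sat_InCell (f := fun c => qi c.+1)) (fun c => ltn_qi_exp2 c.+1). Qed.

Definition LastOfRowAbove w b k := FAnd (FLt w b) (FAnd (FNot (SameRow w b k))
  (FAll k (FImp (FAnd (FLt w k) (FLt k b)) (SameRow k b k.+1)))).

Lemma sat_LastOfRowAbove n e w b k : env n e -> w < k -> b < k ->
  (sat n e (LastOfRowAbove w b k) <-> exists2 c, cf (e b) = c.+1 & e w = qi c + c).
Proof.
move=> he hw hb; rewrite /LastOfRowAbove; cbn -[SameRow FImp leq]; rewrite sat_SameRow //.
have /andP [qb_le ub] := cf_bounds (e b).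
split=> [[lt_wb [ne_cf same_after]]|[c ecb ew]].
  have lt_cf : cf (e w) < cf (e b) by have := cf_mono (ltnW lt_wb); lia.
  have [c ecb] : exists c, cf (e b) = c.+1 by exists (cf (e b)).-1; lia.
  exists c => //; have := ltn_qi_cf lt_cf; rewrite ecb qiS in qb_le * => lt_w.
  have [eq_w1|lt_w1] : (e w).+1 = qi c + c.+1 \/ (e w).+1 < qi c + c.+1 by lia.
    lia.
  have hm : qi c + c <= n by have := he b; lia.
  have he' := env_upd k he hm; have /sat_FImp := same_after _ hm.
  cbn -[SameRow leq]; simpl_upd.
  rewrite sat_SameRow //; last lia.
  by simpl_upd; rewrite cf_qiD // ecb; lia.
have eq_qb : qi (cf (e b)) = (qi c + c).+1 by rewrite ecb qiS addnS.
split; first lia; split; first by rewrite ew cf_qiD // ecb; lia.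
move=> m hm; have he' := env_upd k he hm; apply/sat_FImp; cbn -[SameRow leq].
simpl_upd => -[lt_wm lt_mb].
rewrite sat_SameRow //; last lia.
by simpl_upd; apply: cf_unique; apply/andP; lia.
Qed.

Definition BitQf b z k := FEx k (FAnd (LastOfRowAbove k b k.+1) (BitQ k z k.+1)).

Lemma sat_BitQf n e b z k : env n e -> b < k -> z < k ->
  (sat n e (BitQf b z k) <-> bit (rf (e z)) (qf (e b))).
Proof.
move=> he hb hz; rewrite /BitQf /qf; cbn -[LastOfRowAbove BitQ leq]; split.
  case=> m [hm]; have he' := env_upd k he hm.
  rewrite sat_LastOfRowAbove //; last lia.
  simpl_upd => -[[c ecb em]]; subst m.
  by rewrite sat_BitQ //; try lia; simpl_upd; rewrite cf_qiD // ecb.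
move=> set_bit; have [c ecb] : exists c, cf (e b) = c.+1.
  by case: (cf (e b)) set_bit => [|c _]; [rewrite /bit (_ : qi 0 = 0) // div0n | exists c].
have /andP [qb_le _] := cf_bounds (e b); rewrite ecb qiS in qb_le.
have hm : qi c + c <= n by have := he b; lia.
exists (qi c + c); split=> //; have he' := env_upd k he hm.
rewrite sat_LastOfRowAbove ?sat_BitQ //; try lia; simpl_upd; rewrite ?cf_qiD //.
by split; [exists c | rewrite -ecb].
Qed.

Definition ExPos k g := FEx k (FAnd (Diag k k.+1) g).
Definition AllPos k g := FAll k (FImp (Diag k k.+1) g).

Lemma sat_ExPos n e k g (P : nat -> Prop) : env n e ->
  (forall j, qi j + j <= n -> sat n (upd e k (qi j + j)) g <-> P j) ->
  (sat n e (ExPos k g) <-> exists2 j, qi j + j <= n & P j).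
Proof.
move=> he hg; rewrite /ExPos; cbn -[Diag leq]; split.
  case=> m [hm]; have he' := env_upd k he hm; rewrite sat_Diag //; simpl_upd.
  by case=> /diagE dm; rewrite dm hg -?dm //; exists (cf m); rewrite -?dm.
case=> j hj Pj; exists (qi j + j); split=> //; have he' := env_upd k he hj.
by rewrite sat_Diag // hg //; simpl_upd; rewrite cf_qiD ?rf_qiD.
Qed.

Lemma sat_AllPos n e k g (P : nat -> Prop) : env n e ->
  (forall j, qi j + j <= n -> sat n (upd e k (qi j + j)) g <-> P j) ->
  (sat n e (AllPos k g) <-> forall j, qi j + j <= n -> P j).
Proof.
move=> he hg; rewrite /AllPos; cbn -[Diag FImp leq]; split=> all j hj.
  have he' := env_upd k he hj; have /sat_FImp := all _ hj.
  by rewrite sat_Diag // -hg //; simpl_upd; apply; rewrite cf_qiD ?rf_qiD.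
have he' := env_upd k he hj; apply/sat_FImp; rewrite sat_Diag //; simpl_upd.
by move=> /diagE dj; rewrite dj hg -?dj //; apply: all; rewrite -dj.
Qed.

Definition Carry b db z k := ExPos k (FAnd (FLt k z) (FAnd (BitQf b k k.+1)
  (FAnd (BitC db k k.+1) (AllPos k.+1 (FImp (FAnd (FLt k k.+1) (FLt k.+1 z))
    (FOr (BitQf b k.+1 k.+2) (BitC db k.+1 k.+2))))))).

Lemma sat_Carry n e b db z k : env n e -> b < k -> db < k -> z < k ->
  rf (e db) = cf (e db) -> rf (e z) = cf (e z) ->
  (sat n e (Carry b db z k) <-> carry (qf (e b)) (cf (e db)).+1 (rf (e z))).
Proof.
move=> he hb hdb hz diag_db diag_z.
have row_db : qi (cf (e db)) + cf (e db) <= n by rewrite -diagE.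
have ez : e z = qi (rf (e z)) + rf (e z) by rewrite {1}(diagE diag_z) diag_z.
set x := qf (e b); set y := (cf (e db)).+1; set J := rf (e z) in ez *.
have bound l : l < J -> qi l + l <= n by rewrite -ltn_diag -ez; have := he z; lia.
rewrite carry_lookahead /Carry.
rewrite (sat_ExPos (P := fun i => [/\ i < J, bit i x, bit i y &
                              forall l, i < l -> l < J -> bit l x || bit l y])) //.
  by split=> [[i _ ?]|[i [lt_iJ ? ? ?]]]; [exists i | exists i; [exact: bound|]].
move=> i hi; have he' := env_upd k he hi; cbn -[BitQf BitC AllPos leq].
rewrite sat_BitQf ?sat_BitC //; try lia; simpl_upd; rewrite ?rf_qiD ?cf_qiD //.
rewrite (sat_AllPos (P := fun l => i < l -> l < J -> bit l x || bit l y)) //.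
  rewrite ez ltn_diag.
  split=> [[lt_iJ [bx [by_ all]]]|[lt_iJ bx by_ all]].
    by split=> // l lt_il lt_lJ; apply: all => //; exact: bound.
  by do 3!split=> //; move=> l _; exact: all.
move=> l hl; have he'' := env_upd k.+1 he' hl; rewrite sat_FImp; cbn -[BitQf BitC leq].
rewrite sat_BitQf ?sat_BitC //; try lia; simpl_upd; rewrite ?rf_qiD ?cf_qiD // ez !ltn_diag.
by split=> [imp ? ?|imp [? ?]]; apply/orP; apply: imp.
Qed.

Definition SumBit b db z k := FXor (FXor (BitQf b z k) (BitC db z k)) (Carry b db z k).

Lemma sat_SumBit n e b db z k : env n e -> b < k -> db < k -> z < k ->
  rf (e db) = cf (e db) -> rf (e z) = cf (e z) ->
  (sat n e (SumBit b db z k) <-> bit (rf (e z)) (qf (e b) + (cf (e db)).+1)).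
Proof.
move=> he hb hdb hz diag_db diag_z; rewrite bit_add.
apply: sat_FXor; last exact: sat_Carry.
apply: sat_FXor; first exact: sat_BitQf.
by apply: sat_BitC; rewrite // -diagE.
Qed.

Definition BitsAgree b db da k := AllPos k (FIff (SumBit b db k k.+1) (BitC da k k.+1)).

Lemma sat_BitsAgree n e b db da k : env n e -> b < k -> db < k -> da < k ->
  rf (e db) = cf (e db) -> rf (e da) = cf (e da) ->
  (sat n e (BitsAgree b db da k) <-> forall j, qi j + j <= n ->
     bit j (qf (e b) + (cf (e db)).+1) = bit j (cf (e da)).+1).
Proof.
move=> he hb hdb hda diag_db diag_da; apply: sat_AllPos => // j hj.
have he' := env_upd k he hj.
rewrite sat_FIff sat_SumBit ?sat_BitC //; try lia; simpl_upd; rewrite ?rf_qiD ?cf_qiD //.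
- by split=> [[] *|->]; first apply/idP/idP.
- by rewrite -diagE.
Qed.

(** * The formula for r *)

(* Variable 0 is a, 1 is b, 2 the diagonal cell of the column of a, 3 that of
   the column of b. *)
Definition PhiR := FEx 2 (FEx 3 (FAnd (Diag 2 5) (FAnd (SameCol 2 0 5)
  (FAnd (Diag 3 5) (FAnd (SameCol 3 1 5) (FAnd (FNot (FLt 2 1)) (BitsAgree 1 3 2 4))))))).

Lemma sat_PhiR n e : env n e -> (sat n e PhiR <-> rf (e 0) = e 1).
Proof.
move=> he; rewrite /PhiR; cbn -[Diag SameCol BitsAgree leq].
split=> [[da [hda [db [hdb]]]]|rab].
  have he2 := env_upd 3 (env_upd 2 he hda) hdb.
  rewrite !sat_Diag ?sat_SameCol //; simpl_upd.
  case=> diag_da [col_a [diag_db [col_b [/negP le_b]]]]; rewrite -leqNgt in le_b.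
  rewrite sat_BitsAgree //; simpl_upd => // agree.
  rewrite -diag_db col_b qf_addS_rf -diag_da col_a in agree.
  have eda : da = qi (rf (e 0)) + rf (e 0) by rewrite {1}(diagE diag_da) -diag_da col_a.
  apply/esym/succ_eq_of_bits; first lia.
  by move=> j le_j; apply: agree; have := leq_qi le_j; lia.
have bound x : x <= n -> qi (rf x) + rf x <= n.
  by have := cfrfE x; have := leq_qi (rf_leq_cf x); lia.
exists (qi (rf (e 0)) + rf (e 0)); split; first exact: bound.
exists (qi (rf (e 1)) + rf (e 1)); split; first exact: bound.
have he2 := env_upd 3 (env_upd 2 he (bound _ (he 0))) (bound _ (he 1)).
rewrite !sat_Diag ?sat_SameCol ?sat_BitsAgree //; simpl_upd; rewrite ?rf_qiD ?cf_qiD //.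
do 5!split=> //; first by apply/negP; rewrite -leqNgt -rab leq_addl.
by move=> j _; rewrite qf_addS_rf rab.
Qed.

Theorem lemma3p6 :
  exists phi : form,
    forall (n a b : nat), a <= n -> b <= n ->
      forall e : nat -> nat, (forall i, e i <= n) -> e 0 = a -> e 1 = b ->
        (sat n e phi <-> rf a = b).
Proof. by exists PhiR => n a b _ _ e he <- <-; exact: sat_PhiR. Qed.
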